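(* For a topological space $X$ the following are equivalent: (1) $X$ is an Alster space; (2) $X$ satisfies ${\sf S}_1(\mathcal{G}_K,\mathcal{G})$; (3) ${\sf S}_1(\mathcal{G}_K,\mathcal{G}_\Omega)$; (4) ${\sf S}_1(\mathcal{G}_K,\mathcal{G}^{gp})$; (5) ${\sf S}_1(\mathcal{G}_K,\mathcal{G}_\Omega^{gp})$; (6) ${\sf S}_{fin}(\mathcal{G}_K,\mathcal{G})$; (7) ${\sf S}_{fin}(\mathcal{G}_K,\mathcal{G}^{gp})$; (8) ${\sf S}_{fin}(\mathcal{G}_K,\mathcal{G}_\Omega^{gp})$.
   Context: All spaces are infinite ${\sf T}_1$ topological spaces. $\mathcal{G}_K$ is the family of all collections $\mathcal{U}$ of ${\sf G}_\delta$ subsets of $X$ with $X\notin\mathcal{U}$ such that each compact subset of $X$ is contained in some member of $\mathcal{U}$. $\mathcal{G}$ is the family of all covers of $X$ by ${\sf G}_\delta$ sets. $\mathcal{G}_\Omega$ is the family of $\mathcal{U}\in\mathcal{G}$ with $X\notin\mathcal{U}$ such that every finite subset of $X$ is contained in some member of $\mathcal{U}$. $\mathcal{G}^{gp}$ is the family of $\mathcal{U}\in\mathcal{G}$ admitting a partition $\mathcal{U}=\bigcup_{n\in\mathbb{N}}\mathcal{U}_n$ into pairwise disjoint finite sets such that each $x\in X$ lies in $\bigcup\mathcal{U}_n$ for all but finitely many $n$; $\mathcal{G}_\Omega^{gp}=\mathcal{G}_\Omega\cap\mathcal{G}^{gp}$. $X$ is an Alster space if every member of $\mathcal{G}_K$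 has a countable subfamily covering $X$. ${\sf S}_1(\mathcal{A},\mathcal{B})$: for each sequence $(A_n)$ of elements of $\mathcal{A}$ there are $B_n\in A_n$ with $\{B_n:n\in\mathbb{N}\}\in\mathcal{B}$. ${\sf S}_{fin}(\mathcal{A},\mathcal{B})$: for each sequence $(A_n)$ of elements of $\mathcal{A}$ there are finite $B_n\subseteq A_n$ with $\bigcup_n B_n\in\mathcal{B}$. *)

From Stdlib Require Import List Arith.
Import ListNotations.

Section Topo.
Variable X : Type.
Variable open : (X -> Prop) -> Prop.

Definition family := (X -> Prop) -> Prop.

Definition is_topology : Prop :=
  open (fun _ => True) /\ open (fun _ => False) /\
  (forall F : family, (forall U, F U -> open U) -> open (fun x => exists U, F U /\ U x)) /\
  (forall U V, open U -> open V -> open (fun x => U x /\ V x)).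

Definition T1 : Prop :=
  forall x y : X, x <> y -> exists U, open U /\ U x /\ ~ U y.

Definition infinite_type : Prop := ~ exists l : list X, forall x, In x l.

Definition Gdelta (A : X -> Prop) : Prop :=
  exists U : nat -> (X -> Prop), (forall n, open (U n)) /\ (forall x, A x <-> forall n, U n x).

Definition compact (K : X -> Prop) : Prop :=
  forall F : family, (forall U, F U -> open U) -> (forall x, K x -> exists U, F U /\ U x) ->
  exists l : list (X -> Prop), (forall U, In U l -> F U) /\ (forall x, K x -> exists U, In U l /\ U x).

(* "X is not a member of F" (up to extensional equality of sets) *)
Definition no_full_member (F : family) : Prop := ~ exists A, F A /\ forall x, A x.

Definition cG_K (F : family) : Prop :=
  (forall A, F A -> Gdelta A) /\ no_full_member F /\
  (forall K, compact K -> exists A, F A /\ forall x, K x -> A x).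

Definition cG (F : family) : Prop :=
  (forall A, F A -> Gdelta A) /\ (forall x, exists A, F A /\ A x).

Definition cG_Omega (F : family) : Prop :=
  cG F /\ no_full_member F /\
  (forall l : list X, exists A, F A /\ forall x, In x l -> A x).

Definition cG_gp (F : family) : Prop :=
  cG F /\
  exists P : nat -> list (X -> Prop),
    (forall A, F A <-> exists n, In A (P n)) /\
    (forall n m A, n <> m -> In A (P n) -> ~ In A (P m)) /\
    (forall x, exists N, forall n, N <= n -> exists A, In A (P n) /\ A x).

Definition cG_Omega_gp (F : family) : Prop := cG_Omega F /\ cG_gp F.

Definition S1 (cA cB : family -> Prop) : Prop :=
  forall Fs : nat -> family, (forall n, cA (Fs n)) ->
  exists f : nat -> (X -> Prop), (forall n, Fs n (f n)) /\ cB (fun U => exists n, U = f n).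

Definition Sfin (cA cB : family -> Prop) : Prop :=
  forall Fs : nat -> family, (forall n, cA (Fs n)) ->
  exists g : nat -> list (X -> Prop), (forall n U, In U (g n) -> Fs n U) /\
    cB (fun U => exists n, In U (g n)).

Definition Alster : Prop :=
  forall F : family, cG_K F ->
  exists f : nat -> (X -> Prop), (forall n, F (f n)) /\ (forall x, exists n, f n x).

End Topo.

From Stdlib Require Import List Arith Lia Classical IndefiniteDescription
  FunctionalExtensionality PropExtensionality Cantor FinFun.
Import ListNotations.

(* Every selection principle in the list implies S_fin(G_K, G), and
   S_fin(G_K, G) implies Alster (apply it to a constant sequence).  Conversely
   Alster implies the strongest one, S_1(G_K, G_Omega^gp), which implies all the
   others.  For that, fix a sequence (U_n) in G_K and call a set B
   "infinitely covered" if, for every n, B lies in infinitely many members of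
   U_n (witnessed by an injective sequence).  Compact sets are infinitely
   covered.  By induction on r, using the Alster property at each step, one
   gets for every r a countable family of infinitely covered sets such that any
   r points lie in one of them (Lemma [covering_family_exists]); merging these
   families gives a sequence (D_j) of infinitely covered sets absorbing every
   finite set.  Finally choose pairwise distinct f_n in U_n containing D_j,
   where j runs through 0..2k along the k-th block [k^2, k^2 + 2k] of indices;
   the blocks witness that {f_n} is a groupable omega-cover. *)

Lemma family_ext {X : Type} (F G : family X) : (forall A, F A <-> G A) -> F = G.
Proof.
  intro H. apply functional_extensionality; intro A.
  apply propositional_extensionality, H.
Qed.

Lemma injective_choice {T : Type} (P : nat -> T -> Prop) :
  (forall n (L : list T), exists t, P n t /\ ~ In t L) ->
  exists f : nat -> T, Injective f /\ forall n, P n (f n).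
Proof.
  intro Havoid.
  destruct (functional_choice (fun nL t => P (fst nL) t /\ ~ In t (snd nL))
              (fun nL => Havoid (fst nL) (snd nL))) as [next Hnext].
  set (past := fix past n := match n with 0 => [] | S n => next (n, past n) :: past n end).
  set (f := fun n => next (n, past n)).
  assert (Hpast : forall n m, m < n -> In (f m) (past n)).
  { induction n as [|n IH]; intros m Hm; [lia|]. simpl.
    destruct (Nat.eq_dec m n) as [->|Hne]; [now left|right; apply IH; lia]. }
  exists f. split; [|intro n; exact (proj1 (Hnext (n, past n)))].
  intros n m E. destruct (Nat.lt_trichotomy n m) as [Hlt|[Heq|Hlt]]; auto; exfalso.
  - apply (proj2 (Hnext (m, past m))). fold (f m). rewrite <- E. now apply Hpast.
  - apply (proj2 (Hnext (n, past n))). fold (f n). rewrite E. now apply Hpast.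
Qed.

Lemma injective_escapes {T : Type} (a : nat -> T) :
  Injective a -> forall L : list T, exists m, ~ In (a m) L.
Proof.
  intros Ha L. apply not_all_not_ex. intro Hall.
  assert (Hnd : NoDup (map a (seq 0 (S (length L)))))
    by (apply Injective_map_NoDup; [exact Ha|apply seq_NoDup]).
  assert (Hincl : incl (map a (seq 0 (S (length L)))) L).
  { intros y Hy. apply in_map_iff in Hy. destruct Hy as [m [<- _]]. now apply NNPP. }
  pose proof (NoDup_incl_length Hnd Hincl) as Hlen.
  rewrite length_map, length_seq in Hlen. lia.
Qed.

Lemma Gdelta_countable_inter {X : Type} {open : (X -> Prop) -> Prop} (B : nat -> X -> Prop) :
  (forall i, Gdelta X open (B i)) -> Gdelta X open (fun x => forall i, B i x).
Proof.
  intro HB. destruct (functional_choice _ HB) as [W HW].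
  exists (fun p => W (fst (of_nat p)) (snd (of_nat p))). split.
  - intro p. apply HW.
  - intro x. split.
    + intros Hx p. apply HW, Hx.
    + intros Hx i. apply (HW i). intro k.
      specialize (Hx (to_nat (i, k))). now rewrite cancel_of_to in Hx.
Qed.

Lemma compact_empty {X : Type} {open : (X -> Prop) -> Prop} : compact X open (fun _ => False).
Proof. intros F _ _. exists []. split; [intros U []|intros x []]. Qed.

Lemma compact_union {X : Type} {open : (X -> Prop) -> Prop} (K L : X -> Prop) :
  compact X open K -> compact X open L -> compact X open (fun x => K x \/ L x).
Proof.
  intros HK HL F HF Hcov.
  destruct (HK F HF (fun x h => Hcov x (or_introl h))) as [l1 [H1 H1']].
  destruct (HL F HF (fun x h => Hcov x (or_intror h))) as [l2 [H2 H2']].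
  exists (l1 ++ l2). split.
  - intros U HU. apply in_app_or in HU. destruct HU; auto.
  - intros x [Hx|Hx]; [destruct (H1' x Hx) as [U [HU Ux]]|destruct (H2' x Hx) as [U [HU Ux]]];
      exists U; split; auto; apply in_or_app; auto.
Qed.

Lemma compact_finite {X : Type} {open : (X -> Prop) -> Prop} (l : list X) :
  compact X open (fun x => In x l).
Proof.
  intros F HF Hcov. induction l as [|a l IH].
  - exists []. split; [intros U []|intros x []].
  - destruct IH as [l' [H1 H2]]; [intros x Hx; apply Hcov; now right|].
    destruct (Hcov a (or_introl eq_refl)) as [U [HU Ua]].
    exists (U :: l'). split.
    + intros V [<-|HV]; auto.
    + intros x [<-|Hx]; [exists U; split; simpl; auto|].
      destruct (H2 x Hx) as [V [HV Vx]]. exists V; split; simpl; auto.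
Qed.

Lemma finite_witnesses_of_nonfullness {X : Type} (L : list (X -> Prop)) :
  exists zs : list X, forall C, In C L -> (forall x, C x) \/ exists z, In z zs /\ ~ C z.
Proof.
  induction L as [|C L [zs Hzs]]; [exists []; intros C []|].
  destruct (classic (forall x, C x)) as [Hfull|Hnot].
  - exists zs. intros C' [<-|HC']; auto.
  - apply not_all_ex_not in Hnot. destruct Hnot as [z Hz]. exists (z :: zs).
    intros C' [<-|HC']; [right; exists z; split; simpl; auto|].
    destruct (Hzs C' HC') as [Hfull|[z' [Hz' Hnz']]]; auto.
    right. exists z'; split; simpl; auto.
Qed.

(* Enlarging K by one point outside
   each non-full set of the list forces the chosen member out of the list. *)
Lemma cG_K_avoid {X : Type} {open : (X -> Prop) -> Prop} (F : family X) (K : X -> Prop) :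
  cG_K X open F -> compact X open K -> forall L : list (X -> Prop),
  exists A, F A /\ (forall x, K x -> A x) /\ ~ In A L.
Proof.
  intros [_ [Hnofull Hcpt]] HK L.
  destruct (finite_witnesses_of_nonfullness L) as [zs Hzs].
  destruct (Hcpt _ (compact_union K _ HK (compact_finite zs))) as [A [HA HKA]].
  exists A. split; [exact HA|split; [intros x Hx; apply HKA; now left|]].
  intro HAL. destruct (Hzs A HAL) as [Hfull|[z [Hz Hnz]]].
  - apply Hnofull. now exists A.
  - apply Hnz, HKA. now right.
Qed.

(* S_fin(G_K, G) implies Alster: select from the constant sequence (F, F, ...);
   the selected finite sets, enumerated by pairs, form a countable subcover. *)
Lemma Sfin_cover_Alster {X : Type} {open : (X -> Prop) -> Prop} :
  Sfin X (cG_K X open) (cG X open) -> Alster X open.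
Proof.
  intros HS F HF. destruct (HS (fun _ => F) (fun _ => HF)) as [g [Hg [_ Hcov]]].
  destruct (proj2 (proj2 HF) _ compact_empty) as [A0 [HA0 _]].
  exists (fun p => nth (snd (of_nat p)) (g (fst (of_nat p))) A0). split.
  - intro p. destruct (nth_in_or_default (snd (of_nat p)) (g (fst (of_nat p))) A0) as [Hin|Hdef].
    + exact (Hg _ _ Hin).
    + rewrite Hdef. exact HA0.
  - intro x. destruct (Hcov x) as [A [[n Hn] Ax]]. destruct (In_nth _ _ A0 Hn) as [i [_ Hi]].
    exists (to_nat (n, i)). rewrite cancel_of_to. simpl. now rewrite Hi.
Qed.

(* Enumeration of indices by blocks [k^2, k^2 + 2k]; an index n = k^2 + t
   (t <= 2k) has offset t in its block. *)
Definition block_offset (n : nat) : nat := n - Nat.sqrt n * Nat.sqrt n.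

Lemma block_offset_eq k t : t <= 2 * k -> block_offset (k * k + t) = t.
Proof.
  intro Ht. unfold block_offset. rewrite (Nat.sqrt_unique (k * k + t) k); nia.
Qed.

Lemma block_decompose n : exists k t, t <= 2 * k /\ n = k * k + t.
Proof.
  exists (Nat.sqrt n), (block_offset n). unfold block_offset.
  pose proof (Nat.sqrt_spec n (Nat.le_0_l n)). nia.
Qed.

Lemma block_index_unique k t k' t' :
  t <= 2 * k -> t' <= 2 * k' -> k * k + t = k' * k' + t' -> k = k'.
Proof.
  intros Ht Ht' E. destruct (Nat.lt_trichotomy k k') as [Hlt|[Heq|Hlt]]; auto; exfalso.
  - assert (S k * S k <= k' * k') by (apply Nat.mul_le_mono; lia). nia.
  - assert (S k' * S k' <= k * k) by (apply Nat.mul_le_mono; lia). nia.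
Qed.

Definition block {T : Type} (f : nat -> T) (k : nat) : list T :=
  map (fun t => f (k * k + t)) (seq 0 (S (2 * k))).

Lemma in_block {T : Type} (f : nat -> T) k a :
  In a (block f k) <-> exists t, t <= 2 * k /\ a = f (k * k + t).
Proof.
  unfold block. rewrite in_map_iff. split.
  - intros [t [<- Ht]]. apply in_seq in Ht. exists t. split; [lia|easy].
  - intros [t [Ht ->]]. exists t. split; [easy|]. apply in_seq. lia.
Qed.

Lemma blocks_cover_range {T : Type} (f : nat -> T) a :
  (exists n, a = f n) <-> exists k, In a (block f k).
Proof.
  split.
  - intros [n ->]. destruct (block_decompose n) as [k [t [Ht ->]]].
    exists k. apply in_block. eauto.
  - intros [k Hk]. apply in_block in Hk. destruct Hk as [t [_ ->]]. eauto.
Qed.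

Lemma blocks_disjoint {T : Type} (f : nat -> T) :
  Injective f -> forall k k' a, k <> k' -> In a (block f k) -> ~ In a (block f k').
Proof.
  intros Hf k k' a Hne Hk Hk'. apply in_block in Hk, Hk'.
  destruct Hk as [t [Ht ->]]. destruct Hk' as [t' [Ht' E]].
  apply Hf in E. apply Hne. exact (block_index_unique k t k' t' Ht Ht' E).
Qed.

Section AlsterSelection.

Variable X : Type.
Variable open : (X -> Prop) -> Prop.
Variable U : nat -> family X.
Hypothesis HU : forall n, cG_K X open (U n).

Definition inf_covered (B : X -> Prop) : Prop :=
  exists a : nat -> nat -> (X -> Prop), forall n,
    Injective (a n) /\ forall m, U n (a n m) /\ forall x, B x -> a n m x.

Lemma inf_covered_avoid (B : X -> Prop) :
  inf_covered B -> forall n (L : list (X -> Prop)),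
  exists A, (U n A /\ forall x, B x -> A x) /\ ~ In A L.
Proof.
  intros [a Ha] n L. destruct (Ha n) as [Hinj Hmem].
  destruct (injective_escapes (a n) Hinj L) as [m Hm]. exists (a n m). auto.
Qed.

Lemma compact_inf_covered (K : X -> Prop) : compact X open K -> inf_covered K.
Proof.
  intro HK. unfold inf_covered.
  apply (functional_choice (fun n a => Injective a /\ forall m, U n (a m) /\ forall x, K x -> a m x)).
  intro n. destruct (injective_choice (fun _ A => U n A /\ forall x, K x -> A x)) as [a [Hinj Ha]].
  - intros _ L. destruct (cG_K_avoid (U n) K (HU n) HK L) as [A [HA [HKA HAL]]]. eauto.
  - exists a. auto.
Qed.

Definition covering_family (r : nat) (K : X -> Prop) (D : nat -> X -> Prop) : Prop :=
  (forall i x, K x -> D i x) /\ (forall i, inf_covered (D i)) /\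
  (forall l : list X, length l <= r -> exists i, forall x, In x l -> D i x).

Definition step_candidate (r : nat) (K C : X -> Prop) : Prop :=
  Gdelta X open C /\ ~ (forall x, C x) /\
  exists D : nat -> X -> Prop,
    (forall i x, K x -> D i x) /\ (forall i, inf_covered (fun x => C x \/ D i x)) /\
    (forall l : list X, length l <= r -> exists i, forall x, In x l -> D i x).

(* If r-covering families exist over all compact sets, the candidates form a
   G_K family: for compact L take an r-covering family D over K u L and let C
   be the intersection of all the members of the U_n witnessing that the D_i
   are infinitely covered; C is G_delta, contains L, and is not all of X. *)
Lemma step_candidate_cG_K (r : nat) (K : X -> Prop) :
  compact X open K ->
  (forall L, compact X open L -> exists D, covering_family r L D) ->
  cG_K X open (step_candidate r K).
Proof.
  intros HK IH. split; [intros C [HC _]; exact HC|].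
  split; [intros [C [[_ [Hnofull _]] Hfull]]; exact (Hnofull Hfull)|].
  intros L HL.
  destruct (IH _ (compact_union K L HK HL)) as [D [HKL [Hinf Hpts]]].
  destruct (functional_choice _ Hinf) as [a Ha].
  set (C := fun x => forall i n m, a i n m x).
  assert (HDC : forall i n m x, D i x -> a i n m x) by (intros i n; apply Ha).
  exists C. split; [split; [|split]|].
  - apply Gdelta_countable_inter; intro i. apply Gdelta_countable_inter; intro n.
    apply Gdelta_countable_inter; intro m. exact (proj1 (HU n) _ (proj1 (proj2 (Ha i n) m))).
  - intro Hfull. destruct (HU 0) as [_ [Hnofull _]]. apply Hnofull.
    exists (a 0 0 0). split; [apply Ha|intro x; apply Hfull].
  - exists D. split; [intros i x Hx; apply HKL; now left|split; [|exact Hpts]].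
    intro i. exists (a i). intro n. split; [apply Ha|].
    intro m. split; [apply Ha|]. intros x [Hx|Hx]; [apply Hx|now apply HDC].
  - intros x Hx i n m. apply HDC, HKL. now right.
Qed.

(* Induction step: a countable subcover (c_l) of the candidates, together with
   the families D^l attached to the c_l, yields the (r+1)-covering family
   (c_l u D^l_i) indexed by the pairs (l, i). *)
Lemma covering_family_step (r : nat) :
  Alster X open ->
  (forall L, compact X open L -> exists D, covering_family r L D) ->
  forall K, compact X open K -> exists D, covering_family (S r) K D.
Proof.
  intros HA IH K HK.
  destruct (HA _ (step_candidate_cG_K r K HK IH)) as [c [Hc Hcov]].
  destruct (functional_choice (fun l (D : nat -> X -> Prop) => (forall i x, K x -> D i x) /\
      (forall i, inf_covered (fun x => c l x \/ D i x)) /\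
      (forall l' : list X, length l' <= r -> exists i, forall x, In x l' -> D i x)))
    as [Dc HDc]; [intro l; exact (proj2 (proj2 (Hc l)))|].
  exists (fun p x => c (fst (of_nat p)) x \/ Dc (fst (of_nat p)) (snd (of_nat p)) x).
  split; [|split].
  - intros p x Hx. right. now apply HDc.
  - intro p. apply HDc.
  - intros [|y l] Hl; [exists 0; intros x []|].
    destruct (Hcov y) as [l0 Hy].
    destruct (proj2 (proj2 (HDc l0)) l ltac:(simpl in Hl; lia)) as [i Hi].
    exists (to_nat (l0, i)). rewrite cancel_of_to. simpl.
    intros x [<-|Hx]; [now left|right; now apply Hi].
Qed.

Lemma covering_family_exists :
  Alster X open -> forall r K, compact X open K -> exists D, covering_family r K D.
Proof.
  intros HA r. induction r as [|r IH]; intros K HK.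
  - exists (fun _ => K). split; [auto|split; [intros _; now apply compact_inf_covered|]].
    intros [|y l] Hl; [exists 0; intros x []|simpl in Hl; lia].
  - exact (covering_family_step r HA IH K HK).
Qed.

(* Merging the r-covering families over the empty set: a sequence of
   infinitely covered sets absorbing every finite set. *)
Lemma absorbing_sequence :
  Alster X open -> exists D : nat -> X -> Prop,
    (forall j, inf_covered (D j)) /\ forall l : list X, exists j, forall x, In x l -> D j x.
Proof.
  intro HA.
  destruct (functional_choice (fun r D => covering_family r (fun _ => False) D)) as [Dr HDr].
  { intro r. exact (covering_family_exists HA r _ compact_empty). }
  exists (fun j => Dr (fst (of_nat j)) (snd (of_nat j))). split.
  - intro j. apply HDr.
  - intro l. destruct (proj2 (proj2 (HDr (length l))) l (le_n _)) as [i Hi].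
    exists (to_nat (length l, i)). now rewrite cancel_of_to.
Qed.

(* Alster implies S_1(G_K, G_Omega^gp) for the fixed sequence (U_n): choose
   distinct f_n in U_n containing the set D_t, t the offset of n in its block. *)
Lemma Alster_selection :
  Alster X open ->
  exists f : nat -> (X -> Prop), (forall n, U n (f n)) /\
    cG_Omega_gp X open (fun A => exists n, A = f n).
Proof.
  intro HA. destruct (absorbing_sequence HA) as [D [HDinf HDabs]].
  destruct (injective_choice
              (fun n A => U n A /\ forall x, D (block_offset n) x -> A x)) as [f [Hinj Hf]].
  { intros n L. exact (inf_covered_avoid _ (HDinf (block_offset n)) n L). }
  assert (Hblock : forall k t x, t <= 2 * k -> D t x -> f (k * k + t) x).
  { intros k t x Ht Hx. apply Hf. now rewrite block_offset_eq. }
  assert (Homega : forall l : list X, exists A, (exists n, A = f n) /\ forall x, In x l -> A x).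
  { intro l. destruct (HDabs l) as [j Hj].
    exists (f (j * j + j)). split; [eauto|intros x Hx; apply Hblock; [lia|auto]]. }
  assert (Hcover : cG X open (fun A => exists n, A = f n)).
  { split; [intros A [n ->]; exact (proj1 (HU n) _ (proj1 (Hf n)))|].
    intro x. destruct (Homega [x]) as [A [HA' HAx]]. exists A. split; auto. apply HAx. now left. }
  exists f. split; [intro n; apply Hf|]. split; [split; [exact Hcover|split; [|exact Homega]]|].
  - intros [A [[n ->] Hfull]]. destruct (HU n) as [_ [Hnofull _]].
    apply Hnofull. exists (f n). split; [apply Hf|exact Hfull].
  - split; [exact Hcover|]. exists (block f). split; [|split].
    + intro A. apply blocks_cover_range.
    + exact (blocks_disjoint f Hinj).
    + intro x. destruct (HDabs [x]) as [j Hj]. exists j. intros k Hk.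
      exists (f (k * k + j)). split; [apply in_block; exists j; split; [lia|easy]|].
      apply Hblock; [lia|]. apply Hj. now left.
Qed.

End AlsterSelection.

Lemma Alster_S1_Omega_gp {X : Type} {open : (X -> Prop) -> Prop} :
  Alster X open -> S1 X (cG_K X open) (cG_Omega_gp X open).
Proof. intros HA U HU. exact (Alster_selection X open U HU HA). Qed.

Lemma S1_mono {X : Type} (cA cB cB' : family X -> Prop) :
  (forall F, cB F -> cB' F) -> S1 X cA cB -> S1 X cA cB'.
Proof. intros Hsub HS Fs HF. destruct (HS Fs HF) as [f [Hf HB]]. eauto. Qed.

Lemma Sfin_mono {X : Type} (cA cB cB' : family X -> Prop) :
  (forall F, cB F -> cB' F) -> Sfin X cA cB -> Sfin X cA cB'.
Proof. intros Hsub HS Fs HF. destruct (HS Fs HF) as [g [Hg HB]]. eauto. Qed.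

Lemma S1_Sfin {X : Type} (cA cB : family X -> Prop) : S1 X cA cB -> Sfin X cA cB.
Proof.
  intros HS Fs HF. destruct (HS Fs HF) as [f [Hf HB]]. exists (fun n => [f n]). split.
  - intros n V [<-|[]]. apply Hf.
  - replace (fun U => exists n, In U [f n]) with (fun U => exists n, U = f n); [exact HB|].
    apply family_ext. intro V. simpl. split; intros [n Hn]; exists n; intuition.
Qed.

Lemma Alster_iff_between {X : Type} {open : (X -> Prop) -> Prop} (P : Prop) :
  (S1 X (cG_K X open) (cG_Omega_gp X open) -> P) ->
  (P -> Sfin X (cG_K X open) (cG X open)) -> (Alster X open <-> P).
Proof.
  intros Hfrom Hto. split.
  - intro HA. exact (Hfrom (Alster_S1_Omega_gp HA)).
  - intro HP. exact (Sfin_cover_Alster (Hto HP)).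
Qed.

Theorem theorem4p6 (X : Type) (open : (X -> Prop) -> Prop)
  (Htop : is_topology X open) (HT1 : T1 X open) (Hinf : infinite_type X) :
  (Alster X open <-> S1 X (cG_K X open) (cG X open)) /\
  (Alster X open <-> S1 X (cG_K X open) (cG_Omega X open)) /\
  (Alster X open <-> S1 X (cG_K X open) (cG_gp X open)) /\
  (Alster X open <-> S1 X (cG_K X open) (cG_Omega_gp X open)) /\
  (Alster X open <-> Sfin X (cG_K X open) (cG X open)) /\
  (Alster X open <-> Sfin X (cG_K X open) (cG_gp X open)) /\
  (Alster X open <-> Sfin X (cG_K X open) (cG_Omega_gp X open)).
Proof.
  assert (Og_G : forall F, cG_Omega_gp X open F -> cG X open F) by (intros F [[H _] _]; exact H).
  assert (Og_O : forall F, cG_Omega_gp X open F -> cG_Omega X open F) by (intros F [H _]; exact H).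
  assert (Og_gp : forall F, cG_Omega_gp X open F -> cG_gp X open F) by (intros F [_ H]; exact H).
  assert (O_G : forall F, cG_Omega X open F -> cG X open F) by (intros F [H _]; exact H).
  assert (gp_G : forall F, cG_gp X open F -> cG X open F) by (intros F [H _]; exact H).
  repeat split; apply Alster_iff_between; intro H;
    solve [ exact H
          | apply S1_mono with (2 := H); assumption
          | apply S1_Sfin, S1_mono with (2 := H); assumption
          | apply S1_Sfin, H
          | apply Sfin_mono with (2 := H); assumption ].
Qed.
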